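(* For every $h\in C_\mathbb{R}(\mathcal{X}^n)$ and $\mu_1,\dots,\mu_n\in\mathrm{Prob}(\mathcal{X})$, $$P_\mathrm{sym}(h:\mu_1,\dots,\mu_n)=\max\{\mu(h)-\mathcal{I}_\mathrm{sym}(\mu):\mu\in\mathrm{Prob}_{\mu_1,\dots,\mu_n}(\mathcal{X}^n)\},$$ with the maximum attained; moreover $|P_\mathrm{sym}(h:\mu_1,\dots,\mu_n)-P_\mathrm{sym}(h':\mu_1,\dots,\mu_n)|\le\|h-h'\|$ for all $h,h'\in C_\mathbb{R}(\mathcal{X}^n)$.
   Context: $\mathcal{X}=\{t_1,\dots,t_d\}$ is a finite set with a fixed order $t_1<\dots<t_d$; $n\in\mathbb{N}$. $\mathrm{Prob}(\mathcal{X}^k)$ is the set of probability measures on $\mathcal{X}^k$, $C_\mathbb{R}(\mathcal{X}^n)$ the real functions on $\mathcal{X}^n$ with norm $\|f\|=\max|f|$; $\mu(h)=\sum_\mathbf{x}h(\mathbf{x})\mu(\mathbf{x})$. $\mathrm{Prob}_{\mu_1,\dots,\mu_n}(\mathcal{X}^n)$ is the set of $\mu\in\mathrm{Prob}(\mathcal{X}^n)$ whose $i$th marginal is $\mu_i$ for each $i$. For $\mathbf{x}\in\mathcal{X}^N$ its type is $\nu_\mathbf{x}(t)=\#\{j:x_j=t\}/N$. $\mathcal{X}_\le^N$ is the set of sequences in $\mathcal{X}^N$ of the form $(t_1,\dots,t_1,\dots,t_d,\dots,t_d)$. $S_N$ acts by $\sigma(\mathbf{x})=(x_{\sigma^{-1}(1)},\dots,x_{\sigma^{-1}(N)})$.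 An approximating sequence for $(\mu_1,\dots,\mu_n)$ is $\Xi(N)=(\xi_1(N),\dots,\xi_n(N))$ with $\xi_i(N)\in\mathcal{X}_\le^N$ and $\nu_{\xi_i(N)}(t)\to\mu_i(t)$ for all $t$. For $h\in C_\mathbb{R}(\mathcal{X}^n)$, $\kappa_N(h(\mathbf{x}_1,\dots,\mathbf{x}_n))=\frac1N\sum_{j=1}^Nh(x_{1j},\dots,x_{nj})$. The mutual pressure is $$P_\mathrm{sym}(h:\mu_1,\dots,\mu_n)=\limsup_{N\to\infty}\frac1N\log\Biggl[\frac1{(N!)^n}\sum_{\sigma_1,\dots,\sigma_n\in S_N}\exp\bigl(N\kappa_N(h(\sigma_1(\xi_1(N)),\dots,\sigma_n(\xi_n(N))))\bigr)\Biggr]$$ (independent of the approximating sequence), and for $\mu$ with marginals $\mu_1,\dots,\mu_n$, $\mathcal{I}_\mathrm{sym}(\mu)=\sup\{\mu(h)-P_\mathrm{sym}(h:\mu_1,\dots,\mu_n):h\in C_\mathbb{R}(\mathcal{X}^n)\}$. *)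

From HB Require Import structures.
From mathcomp Require Import all_boot all_fingroup.
From Stdlib Require Import Reals ClassicalEpsilon.

Set Implicit Arguments.
Unset Strict Implicit.
Unset Printing Implicit Defensive.

(* The finite ordered alphabet X = {t_1 < ... < t_d} is modelled by 'I_d
   with its natural order.  X^k is {ffun 'I_k -> 'I_d}. *)

Definition rsum (T : finType) (f : T -> R) : R := \big[Rplus/0%R]_(x : T) f x.

Definition isProb (T : finType) (m : T -> R) : Prop :=
  (forall x, (0 <= m x)%R) /\ rsum m = 1%R.

Definition marginal (d n : nat) (m : {ffun 'I_n -> 'I_d} -> R) (i : 'I_n) (t : 'I_d) : R :=
  \big[Rplus/0%R]_(x : {ffun 'I_n -> 'I_d} | x i == t) m x.

Definition coupling (d n : nat) (mus : 'I_n -> 'I_d -> R) (m : {ffun 'I_n -> 'I_d} -> R) : Prop :=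
  isProb m /\ forall i t, marginal m i t = mus i t.

Definition expect (d n : nat) (m : {ffun 'I_n -> 'I_d} -> R) (h : {ffun 'I_n -> 'I_d} -> R) : R :=
  rsum (fun x => (h x * m x)%R).

Definition supdist (d n : nat) (h h' : {ffun 'I_n -> 'I_d} -> R) : R :=
  \big[Rmax/0%R]_(x : {ffun 'I_n -> 'I_d}) Rabs (h x - h' x).

Definition typ (d N : nat) (xi : 'I_N -> 'I_d) (t : 'I_d) : R :=
  (INR #|[pred j : 'I_N | xi j == t]| / INR N)%R.

Definition sorted_seq (d N : nat) (xi : 'I_N -> 'I_d) : Prop :=
  forall j k : 'I_N, (j <= k)%N -> (xi j <= xi k)%N.

Definition approx_seq (d n : nat) (mus : 'I_n -> 'I_d -> R)
  (Xi : forall N : nat, 'I_n -> 'I_N -> 'I_d) : Prop :=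
  (forall N i, sorted_seq (Xi N i)) /\
  forall i t, Un_cv (fun N => typ (Xi N i) t) (mus i t).

Definition is_limsup (u : nat -> R) (L : R) : Prop :=
  (forall eps, (0 < eps)%R -> exists N0, forall N, (N0 <= N)%coq_nat -> (u N <= L + eps)%R) /\
  (forall eps, (0 < eps)%R -> forall N0, exists N, (N0 <= N)%coq_nat /\ (L - eps <= u N)%R).

Definition Rlimsup (u : nat -> R) : R := epsilon (inhabits 0%R) (is_limsup u).

Definition perm_act (d N : nat) (s : {perm 'I_N}) (xi : 'I_N -> 'I_d) : 'I_N -> 'I_d :=
  fun j => xi ((s^-1)%g j).

Definition partfun (d n N : nat) (Xi : 'I_n -> 'I_N -> 'I_d) (h : {ffun 'I_n -> 'I_d} -> R) : R :=
  rsum (fun s : {ffun 'I_n -> {perm 'I_N}} =>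
    exp (INR N * (/ INR N * \big[Rplus/0%R]_(j < N)
           h [ffun i => perm_act (s i) (Xi i) j]))).

Definition Psym (d n : nat) (Xi : forall N : nat, 'I_n -> 'I_N -> 'I_d)
  (h : {ffun 'I_n -> 'I_d} -> R) : R :=
  Rlimsup (fun N => (/ INR N * ln (/ pow (INR (factorial N)) n * partfun (Xi N) h))%R).

(* I is the (finite) value of I_sym(mu) = sup_h (mu(h) - P_sym(h)) *)
Definition is_Isym (d n : nat) (Xi : forall N : nat, 'I_n -> 'I_N -> 'I_d)
  (m : {ffun 'I_n -> 'I_d} -> R) (I : R) : Prop :=
  is_lub (fun r => exists h : {ffun 'I_n -> 'I_d} -> R, r = (expect m h - Psym Xi h)%R) I.

(* Write P h for P_sym(h : mu_1, ..., mu_n).  The proof uses only three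
   properties of P, each inherited from the finite-N terms
   F_N h = (1/N) log[(N!)^-n sum_sigma exp(N kappa_N(h(sigma xi)))]
   through the limsup:
   - P is convex (F_N is a log-sum-exp of functions linear in h);
   - h <= h' + D pointwise implies P h <= P h' + D (same for F_N);
   - adding k 1_{x_i = t} to h adds k mu_i(t) to P (F_N gains exactly
     k times the type of xi_i(N) at t, which converges to mu_i(t)).
   A real-valued convex function on the finite-dimensional space of
   functions X^n -> R has a subgradient m at h; it is built one
   coordinate at a time by a one-dimensional Hahn-Banach step.  The
   second and third properties force m to be a coupling of the mu_i,
   and the subgradient inequality says exactly that g = h attains the
   supremum defining I_sym(m), whence P h = m(h) - I_sym(m).  The
   inequality m(h) - I_sym(m) <= P h for every m is the definition of
   I_sym, and the Lipschitz bound is the second property again. *)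

From Pilot Require Import Defs.
From HB Require Import structures.
From mathcomp Require Import all_boot all_fingroup.
From Stdlib Require Import Reals Lra Lia ClassicalEpsilon Classical FunctionalExtensionality.

Set Implicit Arguments.
Unset Strict Implicit.
Unset Printing Implicit Defensive.

Lemma Rplus_associative : associative Rplus.
Proof. by move=> x y z; rewrite Rplus_assoc. Qed.
HB.instance Definition _ :=
  Monoid.isComLaw.Build R 0%R Rplus Rplus_associative Rplus_comm Rplus_0_l.

Local Open Scope R_scope.

Section RealSums.
Variables (I : Type) (r : seq I) (P : pred I).

Lemma big_Rscal (c : R) (f : I -> R) :
  \big[Rplus/0]_(i <- r | P i) (c * f i) = c * \big[Rplus/0]_(i <- r | P i) f i.
Proof.
apply: (big_rec2 (fun a b => a = c * b)); first by ring.
by move=> i a b _ ->; ring.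
Qed.

Lemma big_Rle (f g : I -> R) : (forall i, P i -> f i <= g i) ->
  \big[Rplus/0]_(i <- r | P i) f i <= \big[Rplus/0]_(i <- r | P i) g i.
Proof.
move=> fg; apply: (big_rec2 (fun a b => a <= b)); first by lra.
by move=> i a b Pi ab; have := fg i Pi; lra.
Qed.

Lemma big_Rconst (c : R) :
  \big[Rplus/0]_(i <- r | P i) c = INR (count P r) * c.
Proof.
elim: r => [|x s IH]; first by rewrite big_nil /=; ring.
by rewrite big_cons /=; case: (P x); rewrite IH ?add1n ?add0n ?S_INR; ring.
Qed.
End RealSums.

Section FiniteSums.
Variable T : finType.

Lemma rsum_ext (f g : T -> R) : (forall x, f x = g x) -> rsum f = rsum g.
Proof. by move=> fg; apply: eq_bigr => x _. Qed.

Lemma rsum_add (f g : T -> R) : rsum (fun x => f x + g x) = rsum f + rsum g.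
Proof. exact: big_split. Qed.

Lemma rsum_scal (c : R) (f : T -> R) : rsum (fun x => c * f x) = c * rsum f.
Proof. exact: big_Rscal. Qed.

Lemma rsum_le (f g : T -> R) : (forall x, f x <= g x) -> rsum f <= rsum g.
Proof. by move=> fg; apply: big_Rle => x _. Qed.

Lemma rsum_indicator (A : pred T) : rsum (fun x => if A x then 1 else 0) = INR #|A|.
Proof.
rewrite /rsum -big_mkcond big_Rconst Rmult_1_r cardE /enum_mem size_filter.
by rewrite /index_enum; case: index_enum_key.
Qed.

Lemma rsum_const (c : R) : rsum (fun _ : T => c) = INR #|T| * c.
Proof. by rewrite /rsum big_Rconst cardE /enum_mem count_predT size_filter. Qed.

Lemma rsum_pos (f : T -> R) (x0 : T) :
  (forall x, 0 <= f x) -> 0 < f x0 -> 0 < rsum f.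
Proof.
move=> f_ge0 fx0_gt0; rewrite /rsum (bigD1 x0) //=.
have : 0 <= \big[Rplus/0]_(x | x != x0) f x.
  by apply: (big_ind (fun a => 0 <= a)) => //; [lra | move=> a b; lra].
lra.
Qed.

Lemma rsum_delta (x0 : T) (f : T -> R) :
  rsum (fun x => (if x == x0 then 1 else 0) * f x) = f x0.
Proof.
rewrite /rsum (bigD1 x0) //= eqxx big1 ?Rmult_1_l ?Rplus_0_r //.
by move=> x /negbTE ->; ring.
Qed.

Lemma supdist_ge (h h' : T -> R) x :
  Rabs (h x - h' x) <= \big[Rmax/0]_(y : T) Rabs (h y - h' y).
Proof.
have : x \in index_enum T by exact: mem_index_enum.
elim: (index_enum T) => [|y s IH] //.
rewrite in_cons big_cons => /orP [/eqP ->|xs]; first exact: Rmax_l.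
exact: Rle_trans (IH xs) (Rmax_r _ _).
Qed.
End FiniteSums.

Lemma INR_expn a b : INR (expn a b) = INR a ^ b.
Proof.
elim: b => [|b IH]; first by rewrite expn0.
by rewrite expnS -multE mult_INR IH.
Qed.

Lemma Rabs_le_inv a b : Rabs a <= b -> - b <= a <= b.
Proof. by move=> ab; split_Rabs; lra. Qed.

Lemma supdist_bound (d n : nat) (h h' : {ffun 'I_n -> 'I_d} -> R) x :
  - supdist h h' <= h x - h' x <= supdist h h'.
Proof. exact: Rabs_le_inv (supdist_ge h h' x). Qed.

Lemma ln_le_compat x y : 0 < x -> x <= y -> ln x <= ln y.
Proof. by move=> x_gt0 [xy|->]; [apply/Rlt_le/ln_increasing | lra]. Qed.

(* Convexity of exp, from the tangent-line bound 1 + u <= exp u at the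
   barycentre. *)
Lemma exp_convex t u v : 0 <= t <= 1 ->
  exp (t * u + (1 - t) * v) <= t * exp u + (1 - t) * exp v.
Proof.
move=> t01; set c := t * u + (1 - t) * v.
have tangent z : exp c * (1 + (z - c)) <= exp z.
  have -> : exp z = exp c * exp (z - c) by rewrite -exp_plus; f_equal; ring.
  by apply: Rmult_le_compat_l; [apply/Rlt_le/exp_pos | apply: exp_ineq1_le].
have Tu := tangent u; have Tv := tangent v.
have : t * (exp c * (1 + (u - c))) + (1 - t) * (exp c * (1 + (v - c))) = exp c.
  by rewrite /c; ring.
nra.
Qed.

Section LogSumExp.
Variables (U : finType) (u0 : U).

Definition lse (a : U -> R) : R := ln (rsum (fun s => exp (a s))).

Lemma sum_exp_pos (a : U -> R) : 0 < rsum (fun s => exp (a s)).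
Proof. by apply: (rsum_pos (x0 := u0)) => [s|]; [apply: Rlt_le|]; apply: exp_pos. Qed.

Lemma lse_shift (a : U -> R) c : lse (fun s => a s + c) = lse a + c.
Proof.
rewrite /lse (rsum_ext (g := fun s => exp c * exp (a s))); last first.
  by move=> s; rewrite exp_plus Rmult_comm.
rewrite rsum_scal ln_mult ?ln_exp; [ring | exact: exp_pos | exact: sum_exp_pos].
Qed.

Lemma lse_mono (a b : U -> R) : (forall s, a s <= b s) -> lse a <= lse b.
Proof.
move=> ab; apply: ln_le_compat; first exact: sum_exp_pos.
by apply: rsum_le => s; case: (ab s) => [/exp_increasing/Rlt_le | ->]; [|lra].
Qed.

(* Convexity: apply the convexity of exp termwise to the normalized
   weights exp (a s) / A and exp (b s) / B, each of which sums to 1. *)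
Lemma lse_convex (a b : U -> R) t : 0 <= t <= 1 ->
  lse (fun s => t * a s + (1 - t) * b s) <= t * lse a + (1 - t) * lse b.
Proof.
move=> t01; rewrite /lse.
set A := rsum (fun s => exp (a s)); set B := rsum (fun s => exp (b s)).
have A_gt0 : 0 < A := sum_exp_pos a; have B_gt0 : 0 < B := sum_exp_pos b.
set w := t * ln A + (1 - t) * ln B.
have normalize (c : U -> R) C s : 0 < C -> / C * exp (c s) = exp (c s - ln C).
  by move=> C_gt0; rewrite /Rminus exp_plus exp_Ropp exp_ln // Rmult_comm.
rewrite -[X in _ <= X](ln_exp w); apply: ln_le_compat; first exact: sum_exp_pos.
apply: (Rle_trans _ (rsum (fun s =>
         exp w * (t * (/ A * exp (a s)) + (1 - t) * (/ B * exp (b s)))))).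
  apply: rsum_le => s.
  have -> : t * a s + (1 - t) * b s =
            w + (t * (a s - ln A) + (1 - t) * (b s - ln B)) by rewrite /w; ring.
  rewrite exp_plus normalize // normalize //.
  by apply: Rmult_le_compat_l; [apply/Rlt_le/exp_pos | apply: exp_convex].
rewrite rsum_scal rsum_add !rsum_scal -/A -/B !Rinv_l; lra.
Qed.
End LogSumExp.

Lemma limsup_le (u : nat -> R) L K : is_limsup u L ->
  (forall eps, 0 < eps -> exists N0, forall N, (N0 <= N)%coq_nat -> u N <= K + eps) ->
  L <= K.
Proof.
move=> [_ often] eventually; apply: Rnot_lt_le => KL.
have [N0 HN0] := eventually ((L - K) / 3) ltac:(lra).
have [N [N0N uN]] := often ((L - K) / 3) ltac:(lra) N0.
have := HN0 N N0N; lra.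
Qed.

(* The limsup is unique, so the epsilon-chosen Rlimsup of Defs is it. *)
Lemma Rlimsup_eq u L : is_limsup u L -> Rlimsup u = L.
Proof.
move=> uL; have := epsilon_spec (inhabits 0) (is_limsup u) (ex_intro _ L uL).
rewrite -/(Rlimsup u) => uL'.
apply: Rle_antisym; [exact: (limsup_le uL' (proj1 uL)) | exact: (limsup_le uL (proj1 uL'))].
Qed.

Lemma tail_sups (u : nat -> R) B : (forall N, u N <= B) ->
  exists U : nat -> R, forall N0, is_lub (fun x => exists k, (N0 <= k)%coq_nat /\ x = u k) (U N0).
Proof.
move=> u_le.
have tail N0 : {x | is_lub (fun x => exists k, (N0 <= k)%coq_nat /\ x = u k) x}.
  apply: completeness; first by exists B => x [k [_ ->]].
  by exists (u N0), N0.
by exists (fun N0 => proj1_sig (tail N0)) => N0; case: (tail N0).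
Qed.

(* A bounded sequence has a limsup, namely the infimum of its tail suprema. *)
Lemma limsup_exists (u : nat -> R) B : (forall N, - B <= u N <= B) ->
  exists L, is_limsup u L.
Proof.
move=> u_bd; have [U U_lub] := tail_sups (B := B) (fun N => proj2 (u_bd N)).
have U_ge k N0 : (N0 <= k)%coq_nat -> u k <= U N0.
  by move=> N0k; apply: (proj1 (U_lub N0)); exists k.
have [L' L'_lub] : {L' | is_lub (fun y => exists N0, y = - U N0) L'}.
  apply: completeness; last by exists (- U 0%nat), 0%nat.
  by exists B => y [N0 ->]; have := U_ge N0 N0 (le_n _); have := u_bd N0; lra.
exists (- L'); split.
- move=> eps eps_gt0.
  have [N0 HN0] : exists N0, U N0 <= - L' + eps.
    apply: NNPP => none; suff : L' <= L' - eps by lra.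
    apply: (proj2 L'_lub) => y [N0 ->].
    have : ~ U N0 <= - L' + eps by move=> H; apply: none; exists N0.
    lra.
  by exists N0 => N N0N; have := U_ge N N0 N0N; lra.
- move=> eps eps_gt0 N0.
  have : - L' <= U N0 by have := proj1 L'_lub (- U N0) (ex_intro _ N0 erefl); lra.
  move=> UL; apply: NNPP => none; suff : U N0 <= - L' - eps by lra.
  apply: (proj2 (U_lub N0)) => x [k [N0k ->]].
  have : ~ - L' - eps <= u k by move=> H; apply: none; exists k.
  lra.
Qed.

Lemma limsup_le_shift u v c Lu Lv cl : is_limsup u Lu -> is_limsup v Lv ->
  (exists N1, forall N, (N1 <= N)%coq_nat -> u N <= v N + c N) -> Un_cv c cl ->
  Lu <= Lv + cl.
Proof.
move=> uLu [vLv _] [N1 uvc] c_cv; apply: (limsup_le uLu) => eps eps_gt0.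
have [N2 HN2] := vLv (eps / 2) ltac:(lra).
have [N3 HN3] := c_cv (eps / 2) ltac:(lra).
exists (Nat.add (Nat.add N1 N2) N3) => N HN.
have := uvc N ltac:(lia); have := HN2 N ltac:(lia); have := HN3 N ltac:(lia).
rewrite /R_dist => cN; have := Rle_abs (c N - cl); lra.
Qed.

Lemma limsup_le_convex w u v Lw Lu Lv t :
  is_limsup w Lw -> is_limsup u Lu -> is_limsup v Lv -> 0 <= t <= 1 ->
  (exists N1, forall N, (N1 <= N)%coq_nat -> w N <= t * u N + (1 - t) * v N) ->
  Lw <= t * Lu + (1 - t) * Lv.
Proof.
move=> wLw [uLu _] [vLv _] t01 [N1 wuv]; apply: (limsup_le wLw) => eps eps_gt0.
have [N2 HN2] := uLu _ eps_gt0; have [N3 HN3] := vLv _ eps_gt0.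
exists (Nat.add (Nat.add N1 N2) N3) => N HN.
have := wuv N ltac:(lia); have := HN2 N ltac:(lia); have := HN3 N ltac:(lia).
nra.
Qed.

Lemma Un_cv_const c : Un_cv (fun _ => c) c.
Proof. by move=> eps eps_gt0; exists 0%nat => N _; rewrite /R_dist Rminus_diag Rabs_R0. Qed.

Lemma exists_between (A B : R -> Prop) :
  (exists a, A a) -> (exists b, B b) -> (forall a b, A a -> B b -> a <= b) ->
  exists c, (forall a, A a -> a <= c) /\ (forall b, B b -> c <= b).
Proof.
move=> A_ne [b0 Bb0] AB.
have [c [c_ub c_least]] := completeness A (ex_intro _ b0 (fun a Aa => AB a b0 Aa Bb0)) A_ne.
by exists c; split => // b Bb; apply: c_least => a Aa; exact: AB.
Qed.

Lemma Rdiv_le_cross r t X Y : 0 < r -> 0 < t -> t * X <= r * Y -> X / r <= Y / t.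
Proof.
move=> r_gt0 t_gt0 XY.
have -> : X / r = (t * X) * / (r * t) by field; lra.
have -> : Y / t = (r * Y) * / (r * t) by field; lra.
by apply: Rmult_le_compat_r => //; apply/Rlt_le/Rinv_0_lt_compat; nra.
Qed.

Definition pairing (T : finType) (m w : T -> R) : R := rsum (fun x => w x * m x).

Lemma pairing_linear (T : finType) (m w w' : T -> R) a b :
  pairing m (fun x => a * w x + b * w' x) = a * pairing m w + b * pairing m w'.
Proof. by rewrite /pairing -!rsum_scal -rsum_add; apply: rsum_ext => x; ring. Qed.

Lemma pairing_update (T : finType) (m w : T -> R) x0 c :
  pairing (fun x => if x == x0 then c else m x) w =
  pairing m (fun x => if x == x0 then 0 else w x) + w x0 * c.
Proof.
rewrite /pairing /rsum (bigD1 x0) //= (bigD1 x0 (F := fun x => _ * m x)) //=.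
rewrite !eqxx Rmult_0_l Rplus_0_l Rplus_comm; f_equal.
by apply: eq_bigr => x /negbTE ->.
Qed.

(* A convex function P on the finite-dimensional space T -> R has a
   subgradient at every point h.  It is constructed coordinate by
   coordinate: a subgradient on the functions supported on s is extended
   to x0 :: s by choosing its value at x0 between the left and right
   difference quotients of P in the direction of the point mass at x0. *)
Section ConvexSubgradient.
Variables (T : finType) (P : (T -> R) -> R).
Hypothesis P_convex : forall p q t, 0 <= t <= 1 ->
  P (fun x => t * p x + (1 - t) * q x) <= t * P p + (1 - t) * P q.
Variable h : T -> R.

Definition supported_on (s : seq T) (w : T -> R) : Prop := forall x, x \notin s -> w x = 0.

Definition subgradient_on (s : seq T) (m : T -> R) : Prop :=
  forall w, supported_on s w -> P h + pairing m w <= P (fun x => h x + w x).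

(* Left quotients lie below right quotients, in any direction e, relative
   to a partial subgradient: this is convexity of P along the segment
   from h + w + t e to h + w' - r e, which passes through h + z with z
   supported on s. *)
Lemma difference_quotients_ordered s m (e : T -> R) r t w w' :
  subgradient_on s m -> 0 < r -> 0 < t -> supported_on s w -> supported_on s w' ->
  (P h + pairing m w' - P (fun x => h x + w' x - r * e x)) / r <=
  (P (fun x => h x + w x + t * e x) - P h - pairing m w) / t.
Proof.
move=> m_sub r_gt0 t_gt0 w_supp w'_supp.
set q := / (r + t).
have q_gt0 : 0 < q by apply: Rinv_0_lt_compat; lra.
have rtq : (r + t) * q = 1 by rewrite /q; field; lra.
have l01 : 0 <= r * q <= 1 by split; nra.
set z := fun x => r * q * w x + t * q * w' x.
have z_supp : supported_on s z by move=> x xs; rewrite /z w_supp // w'_supp //; ring.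
have sub_z := m_sub z z_supp.
have conv := P_convex (fun x => h x + w x + t * e x) (fun x => h x + w' x - r * e x) l01.
rewrite (_ : (fun x => r * q * (h x + w x + t * e x) + (1 - r * q) * (h x + w' x - r * e x))
             = (fun x => h x + z x)) in conv; last first.
  by apply: functional_extensionality => x; rewrite /z /q; field; lra.
rewrite /z pairing_linear in sub_z.
rewrite (_ : 1 - r * q = t * q) in conv; last by rewrite /q; field; lra.
set A := P (fun x => h x + w x + t * e x) in conv *.
set B := P (fun x => h x + w' x - r * e x) in conv *.
apply: Rdiv_le_cross => //.
have := Rmult_le_compat_l (r + t) _ _ ltac:(lra) (Rle_trans _ _ _ sub_z conv).
have -> : (r + t) * (P h + (r * q * pairing m w + t * q * pairing m w')) =
          (r + t) * P h + r * pairing m w + t * pairing m w' by rewrite /q; field; lra.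
have -> : (r + t) * (r * q * A + t * q * B) = r * A + t * B by rewrite /q; field; lra.
lra.
Qed.

Lemma subgradient_extend s m x0 :
  subgradient_on s m -> exists m', subgradient_on (x0 :: s) m'.
Proof.
move=> m_sub; pose e x : R := if x == x0 then 1 else 0.
pose left y := exists r w, 0 < r /\ supported_on s w /\
  y = (P h + pairing m w - P (fun x => h x + w x - r * e x)) / r.
pose right y := exists t w, 0 < t /\ supported_on s w /\
  y = (P (fun x => h x + w x + t * e x) - P h - pairing m w) / t.
have [c [c_left c_right]] : exists c, (forall a, left a -> a <= c) /\ (forall b, right b -> c <= b).
  apply: exists_between.
  - by eexists; exists 1, (fun _ => 0); split; [lra | split].
  - by eexists; exists 1, (fun _ => 0); split; [lra | split].
  - move=> a b [r [w' [r_gt0 [w'_supp ->]]]] [t [w [t_gt0 [w_supp ->]]]].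
    exact: (difference_quotients_ordered e m_sub).
exists (fun x => if x == x0 then c else m x) => w w_supp.
set t := w x0; pose w' x := if x == x0 then 0 else w x.
have w'_supp : supported_on s w'.
  move=> x xs; rewrite /w'; case: eqP => // /eqP x_neq.
  by apply: w_supp; rewrite in_cons negb_or x_neq.
rewrite pairing_update -/t -/w'.
have split_w u : u = t -> (fun x => h x + w x) = (fun x => h x + w' x + u * e x).
  by move=> ->; apply: functional_extensionality => x; rewrite /w' /e /t; case: eqP => [-> | _]; ring.
set Q := P (fun x => h x + w x).
have cancel_mul a b : b <> 0 -> a / b * b = a by move=> b_neq0; field.
case: (Rtotal_order t 0) => [t_neg | [t_zero | t_pos]].
- have : left ((P h + pairing m w' - Q) / - t).
    exists (- t), w'; split; [lra | split => //].
    rewrite /Q (split_w t erefl); do 3 f_equal.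
    by apply: functional_extensionality => x; ring.
  move=> /c_left /(Rmult_le_compat_r (- t) _ _ ltac:(lra)).
  rewrite cancel_mul; [nra | lra].
- have := m_sub w' w'_supp; rewrite /Q (split_w 0 (esym t_zero)) t_zero.
  rewrite (_ : (fun x => _ + 0 * e x) = fun x => h x + w' x); first by rewrite Rmult_0_l Rplus_0_r.
  by apply: functional_extensionality => x; ring.
- have : right ((Q - P h - pairing m w') / t) by exists t, w'; rewrite /Q -(split_w t erefl).
  move=> /c_right /(Rmult_le_compat_r t _ _ ltac:(lra)).
  rewrite cancel_mul; [nra | lra].
Qed.

Theorem convex_subgradient :
  exists m, forall w, P h + pairing m w <= P (fun x => h x + w x).
Proof.
have [m m_sub] : exists m, subgradient_on (index_enum T) m.
  elim: (index_enum T) => [|x0 s [m m_sub]]; last exact: subgradient_extend m_sub.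
  exists (fun _ => 0) => w w0.
  have -> : (fun x => h x + w x) = h.
    by apply: functional_extensionality => x; rewrite w0 // Rplus_0_r.
  rewrite /pairing (rsum_ext (g := fun _ => 0)) ?rsum_const; [lra | by move=> x; ring].
by exists m => w; apply: m_sub => x; rewrite mem_index_enum.
Qed.
End ConvexSubgradient.

Lemma pairing_scal (T : finType) (m w : T -> R) k :
  pairing m (fun x => k * w x) = k * pairing m w.
Proof. by rewrite /pairing -rsum_scal; apply: rsum_ext => x; ring. Qed.

Section LipschitzFunctional.
Variables (T : finType) (P : (T -> R) -> R).
Hypothesis P_lip : forall h h' D, (forall x, h x <= h' x + D) -> P h <= P h' + D.

(* Applied in both directions, the hypothesis on P is 1-Lipschitz
   continuity for the sup norm. *)
Lemma lip_abs h h' D : (forall x, - D <= h x - h' x <= D) -> Rabs (P h - P h') <= D.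
Proof.
move=> hh'; apply: Rabs_le.
have := P_lip (h := h) (h' := h') (D := D) (fun x => ltac:(have := hh' x; lra)).
have := P_lip (h := h') (h' := h) (D := D) (fun x => ltac:(have := hh' x; lra)).
by split; lra.
Qed.

Lemma lip_shift_const h k : P (fun x => h x + k * 1) = P h + k * 1.
Proof.
apply: Rle_antisym; first by apply: P_lip => x; lra.
have : P h <= P (fun x => h x + k * 1) + - k by apply: P_lip => x; lra.
lra.
Qed.

Variables (h m : T -> R).
Hypothesis m_sub : forall w, P h + pairing m w <= P (fun x => h x + w x).

Lemma subgradient_direction (f : T -> R) c :
  (forall k, P (fun x => h x + k * f x) = P h + k * c) -> pairing m f = c.
Proof.
move=> P_affine.
have := m_sub (fun x => 1 * f x); have := m_sub (fun x => -1 * f x).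
by rewrite !pairing_scal !P_affine; lra.
Qed.

(* Lowering h at x does not raise P, so m x >= 0. *)
Lemma subgradient_nonneg x : 0 <= m x.
Proof.
have := m_sub (fun y => -1 * (if y == x then 1 else 0)).
rewrite pairing_scal /pairing rsum_delta.
have : P (fun y => h y + -1 * (if y == x then 1 else 0)) <= P h + 0.
  by apply: P_lip => y; case: (y == x); lra.
lra.
Qed.

(* Constants shift P by themselves, so m has total mass 1. *)
Lemma subgradient_mass : rsum m = 1.
Proof.
rewrite -[RHS](subgradient_direction (f := fun _ => 1) (c := 1) (lip_shift_const h)).
by apply: rsum_ext => x; ring.
Qed.

(* The subgradient inequality says that g = h attains the supremum of
   m(g) - P g: the value of the convex conjugate of P at m. *)
Lemma subgradient_conjugate :
  is_lub (fun r => exists g, r = pairing m g - P g) (pairing m h - P h).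
Proof.
split; last by move=> b b_ub; apply: b_ub; exists h.
move=> r [g ->]; have := m_sub (fun x => 1 * g x + -1 * h x).
rewrite pairing_linear (_ : (fun x => h x + (1 * g x + -1 * h x)) = g); first lra.
by apply: functional_extensionality => x; ring.
Qed.
End LipschitzFunctional.

Section FinitePressure.
Variables (d n : nat) (Xi : forall N : nat, 'I_n -> 'I_N -> 'I_d).
Notation V := {ffun 'I_n -> 'I_d}.
Notation Perms N := {ffun 'I_n -> {perm 'I_N}}.

Definition empirical_sum N (s : Perms N) (h : V -> R) : R :=
  \big[Rplus/0]_(j < N) h [ffun i => perm_act (s i) (@Xi N i) j].

Definition pressure_at N (h : V -> R) : R :=
  / INR N * ln (/ pow (INR (factorial N)) n * partfun (@Xi N) h).

(* The log-sum-exp below ranges over the nonempty type Perms N. *)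
Definition identity_perms N : Perms N := [ffun => 1%g].

Lemma empirical_sum_linear N s h h' a b :
  empirical_sum (N := N) s (fun x => a * h x + b * h' x) =
  a * empirical_sum s h + b * empirical_sum s h'.
Proof. by rewrite /empirical_sum big_split !big_Rscal. Qed.

Lemma pressure_at_lse N h : (0 < N)%nat ->
  pressure_at N h = / INR N *
    (lse (fun s : Perms N => empirical_sum s h) - ln (pow (INR (factorial N)) n)).
Proof.
move=> N_gt0; have N_neq0 : INR N <> 0 by apply: not_0_INR => N0; rewrite N0 in N_gt0.
have fact_pos : 0 < pow (INR (factorial N)) n.
  by apply/pow_lt/lt_0_INR/ltP; exact: fact_gt0.
rewrite /pressure_at /partfun (rsum_ext (g := fun s => exp (empirical_sum s h))); last first.
  by move=> s; rewrite /empirical_sum; f_equal; field.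
rewrite ln_mult ?ln_Rinv /lse; first (f_equal; ring).
- exact: fact_pos.
- exact: Rinv_0_lt_compat.
- exact: (sum_exp_pos (identity_perms N)).
Qed.

(* F_N inherits monotonicity and translation equivariance from lse. *)
Lemma pressure_at_lip N h h' D : (0 < N)%nat ->
  (forall x, h x <= h' x + D) -> pressure_at N h <= pressure_at N h' + D.
Proof.
move=> N_gt0 hh'; rewrite !pressure_at_lse //.
have N_pos : 0 < INR N by apply/lt_0_INR/ltP.
have : lse (fun s : Perms N => empirical_sum s h) <=
       lse (fun s : Perms N => empirical_sum s h') + INR N * D.
  rewrite -(lse_shift (identity_perms N)); apply: (lse_mono (identity_perms N)) => s.
  have -> : INR N * D = rsum (fun _ : 'I_N => D) by rewrite rsum_const card_ord.
  by rewrite /empirical_sum -rsum_add; apply: rsum_le.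
set L := lse _; set L' := lse _; set c := ln _ => LL'.
have -> : / INR N * (L' - c) + D = / INR N * (L' + INR N * D - c) by field; lra.
by apply: Rmult_le_compat_l; [apply/Rlt_le/Rinv_0_lt_compat | lra].
Qed.

(* F_N is convex, since h |-> N kappa_N(h(sigma xi)) is linear. *)
Lemma pressure_at_convex N h h' t : (0 < N)%nat -> 0 <= t <= 1 ->
  pressure_at N (fun x => t * h x + (1 - t) * h' x) <=
  t * pressure_at N h + (1 - t) * pressure_at N h'.
Proof.
move=> N_gt0 t01; rewrite !pressure_at_lse //.
have N_pos : 0 < INR N by apply/lt_0_INR/ltP.
have := lse_convex (identity_perms N) (fun s => empirical_sum s h)
                   (fun s => empirical_sum s h') t01.
rewrite -(functional_extensionality _ _ (fun s => empirical_sum_linear s h h' t (1 - t))).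
set A := lse _; set B := lse _; set C := lse _; set c := ln _ => ABC.
have -> : t * (/ INR N * (B - c)) + (1 - t) * (/ INR N * (C - c)) =
          / INR N * (t * B + (1 - t) * C - c) by ring.
by apply: Rmult_le_compat_l; [apply/Rlt_le/Rinv_0_lt_compat | lra].
Qed.

Lemma pressure_at_zero N : (0 < N)%nat -> pressure_at N (fun _ => 0) = 0.
Proof.
move=> N_gt0; rewrite pressure_at_lse // /lse /empirical_sum.
rewrite (rsum_ext (g := fun _ => 1)); last first.
  by move=> s; rewrite big1 // exp_0.
by rewrite rsum_const card_ffun card_Sn card_ord INR_expn Rmult_1_r; ring.
Qed.

(* Permuting coordinates does not change how often xi_i(N) takes the
   value t0, so F_N(h + k 1_{x_i = t0}) = F_N(h) + k type(xi_i(N))(t0). *)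
Lemma pressure_at_marginal N h i t0 k : (0 < N)%nat ->
  pressure_at N (fun x => h x + k * (if x i == t0 then 1 else 0)) =
  pressure_at N h + k * typ (@Xi N i) t0.
Proof.
move=> N_gt0; have N_neq0 : INR N <> 0 by apply: not_0_INR => N0; rewrite N0 in N_gt0.
have count_perm (s : Perms N) :
    \big[Rplus/0]_(j < N) (if [ffun i => perm_act (s i) (@Xi N i) j] i == t0 then 1 else 0)
    = INR #|[pred j : 'I_N | @Xi N i j == t0]|.
  rewrite -rsum_indicator (reindex_inj (h := s i) (@perm_inj _ (s i))) /=.
  by apply: eq_bigr => j _; rewrite ffunE /perm_act permK.
rewrite !pressure_at_lse // /typ.
rewrite (_ : lse _ = lse (fun s : Perms N =>
           empirical_sum s h + k * INR #|[pred j : 'I_N | @Xi N i j == t0]|)).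
  by rewrite (lse_shift (identity_perms N)); set L := lse _; set c := ln _; field.
rewrite /lse; f_equal; apply: rsum_ext => s.
by rewrite /empirical_sum big_split big_Rscal count_perm.
Qed.
End FinitePressure.

Section MutualPressure.
Variables (d n : nat) (Xi : forall N : nat, 'I_n -> 'I_N -> 'I_d).
Notation V := {ffun 'I_n -> 'I_d}.

(* F_N h is bounded uniformly in N (by its Lipschitz property and
   F_N 0 = 0), so the limsup defining P_sym exists. *)
Lemma pressure_at_bounded h : exists B, forall N, - B <= pressure_at Xi N h <= B.
Proof.
set D := supdist h (fun _ => 0).
have hD x : h x <= 0 + D /\ 0 <= h x + D.
  by have := supdist_bound h (fun _ => 0) x; rewrite -/D; split; lra.
exists (Rmax D (Rabs (pressure_at Xi 0 h))) => -[|N].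
  by have := Rabs_le_inv (Rle_refl (Rabs (pressure_at Xi 0 h)));
     have := Rmax_r D (Rabs (pressure_at Xi 0 h)); lra.
have up := pressure_at_lip Xi (N := N.+1) (h' := fun _ => 0) isT (fun x => proj1 (hD x)).
have low := pressure_at_lip Xi (N := N.+1) (h := fun _ => 0) isT (fun x => proj2 (hD x)).
rewrite pressure_at_zero // in up low; have := Rmax_l D (Rabs (pressure_at Xi 0 h)); lra.
Qed.

Lemma Psym_limsup h : is_limsup (fun N => pressure_at Xi N h) (Psym Xi h).
Proof.
have [B HB] := pressure_at_bounded h; have [L HL] := limsup_exists HB.
by rewrite /Psym -/(pressure_at Xi _ h) (Rlimsup_eq HL).
Qed.

Lemma Psym_lip h h' D : (forall x, h x <= h' x + D) -> Psym Xi h <= Psym Xi h' + D.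
Proof.
move=> hh'; apply: (limsup_le_shift (Psym_limsup h) (Psym_limsup h') _ (Un_cv_const D)).
by exists 1%nat => N /leP N_gt0; apply: pressure_at_lip.
Qed.

Lemma Psym_convex h h' t : 0 <= t <= 1 ->
  Psym Xi (fun x => t * h x + (1 - t) * h' x) <= t * Psym Xi h + (1 - t) * Psym Xi h'.
Proof.
move=> t01; apply: (limsup_le_convex (Psym_limsup _) (Psym_limsup h) (Psym_limsup h') t01).
by exists 1%nat => N /leP N_gt0; apply: pressure_at_convex.
Qed.

Lemma Psym_marginal (mus : 'I_n -> 'I_d -> R) h i t0 k :
  (forall i t, Un_cv (fun N => typ (@Xi N i) t) (mus i t)) ->
  Psym Xi (fun x => h x + k * (if x i == t0 then 1 else 0)) = Psym Xi h + k * mus i t0.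
Proof.
move=> types_cv.
set hk := fun x => h x + k * (if x i == t0 then 1 else 0).
have shift_cv c : Un_cv (fun N => c * typ (@Xi N i) t0) (c * mus i t0).
  exact: CV_mult (Un_cv_const c) (types_cv i t0).
have [N1 HN1] : exists N1, forall N, (N1 <= N)%coq_nat ->
    pressure_at Xi N hk = pressure_at Xi N h + k * typ (@Xi N i) t0.
  by exists 1%nat => N /leP N_gt0; apply: pressure_at_marginal.
have up : Psym Xi hk <= Psym Xi h + k * mus i t0.
  apply: (limsup_le_shift (Psym_limsup hk) (Psym_limsup h) _ (shift_cv k)).
  by exists N1 => N /HN1 ->; lra.
have low : Psym Xi h <= Psym Xi hk + - k * mus i t0.
  apply: (limsup_le_shift (Psym_limsup h) (Psym_limsup hk) _ (shift_cv (- k))).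
  by exists N1 => N /HN1 ->; lra.
lra.
Qed.
End MutualPressure.

Lemma marginal_pairing (d n : nat) (m : {ffun 'I_n -> 'I_d} -> R) i t :
  marginal m i t = pairing m (fun x => if x i == t then 1 else 0).
Proof.
rewrite /marginal /pairing /rsum big_mkcond; apply: eq_bigr => x _.
by case: (x i == t); ring.
Qed.

Lemma Psym_subgradient_coupling (d n : nat) (mus : 'I_n -> 'I_d -> R)
  (Xi : forall N : nat, 'I_n -> 'I_N -> 'I_d) (h m : {ffun 'I_n -> 'I_d} -> R) :
  approx_seq mus Xi ->
  (forall w, Psym Xi h + pairing m w <= Psym Xi (fun x => h x + w x)) ->
  coupling mus m.
Proof.
move=> [_ types_cv] m_sub; split; first split.
- exact: (subgradient_nonneg (Psym_lip Xi) m_sub).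
- exact: (subgradient_mass (Psym_lip Xi) m_sub).
- move=> i t; rewrite marginal_pairing.
  apply: (subgradient_direction m_sub) => k.
  exact: Psym_marginal.
Qed.

Theorem mainTheorem15 (d n : nat) (mus : 'I_n -> 'I_d -> R)
  (Hmus : forall i, isProb (mus i))
  (Xi : forall N : nat, 'I_n -> 'I_N -> 'I_d) (HXi : approx_seq mus Xi)
  (h : {ffun 'I_n -> 'I_d} -> R) :
  (exists m, coupling mus m /\
     exists I, is_Isym Xi m I /\ Psym Xi h = (expect m h - I)%R) /\
  (forall m, coupling mus m ->
     forall I, is_Isym Xi m I -> (expect m h - I <= Psym Xi h)%R) /\
  (forall h' : {ffun 'I_n -> 'I_d} -> R,
     (Rabs (Psym Xi h - Psym Xi h') <= supdist h h')%R).
Proof.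
(* The maximizer is a subgradient of the convex functional P_sym at h. *)
have [m m_sub] := convex_subgradient (Psym_convex Xi) h.
split; [|split].
- exists m; split; first exact: Psym_subgradient_coupling HXi m_sub.
  exists (expect m h - Psym Xi h); split; last ring.
  exact: (subgradient_conjugate m_sub).
- move=> m' _ I [I_ub _]; have := I_ub _ (ex_intro _ h erefl); lra.
- move=> h'; apply: (lip_abs (Psym_lip Xi)) => x; exact: supdist_bound.
Qed.
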